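(* Let $n\in\mathbb{N}=\{0,1,2,\dots\}$, $a,b\in\mathbb{C}$ with $b\notin\mathbb{Z}^-=\{-1,-2,-3,\dots\}$. Then \[ \frac{1}{2n+b+2}\sum_{j=0}^{n}\sum_{i=0}^{j}\frac{\binom{2n+a+2}{i}}{\binom{2n+b+1}{j}} =\sum_{k=0}^{n}\frac{1}{(k+1)\binom{2k+b+2}{k+1}}\left(\binom{2k+a}{k}+\frac{b\sum_{j=0}^{k-1}\binom{2k+a}{j}}{k+b+1}\right). \]
   Context: For $x\in\mathbb{C}$ and $i\in\mathbb{N}$, the binomial coefficient is $\binom{x}{i}=\frac{x(x-1)\cdots(x-i+1)}{i!}$ (with $\binom{x}{0}=1$); in particular for $m,i\in\mathbb{N}$, $\binom{-m}{i}=(-1)^i\binom{m+i-1}{i}$. Empty sums are $0$. *)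

From HB Require Import structures.
From mathcomp Require Import all_boot all_order all_algebra.
Set Implicit Arguments. Unset Strict Implicit. Unset Printing Implicit Defensive.
Import Order.TTheory GRing.Theory Num.Theory.
Local Open Scope ring_scope.

Definition binomC (R : fieldType) (x : R) (i : nat) : R :=
  (\prod_(j < i) (x - j%:R)) / (i`!)%:R.

From HB Require Import structures.
From mathcomp Require Import all_boot all_order all_algebra.
From mathcomp Require Import ring zify.
Import Order.TTheory GRing.Theory Num.Theory.
Local Open Scope ring_scope.
Set Implicit Arguments. Unset Strict Implicit. Unset Printing Implicit Defensive.

(* Passing from n to n + 1 shifts both binomial arguments on
   the left by 2.  Pascal's rule applied twice gives
   C(x+2, i) = C(x, i) + 2 C(x, i-1) + C(x, i-2), and summation by parts moves
   this (1,2,1) smoothing from the numerators onto the weights 1/C(Y, j), where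
   1/C(Y, j) + 2/C(Y, j+1) + 1/C(Y, j+2) = (Y+1) / ((Y-1) C(Y-2, j)).  The main
   part is thereby the left-hand side for n, and the boundary terms of the
   summation by parts are exactly the new summand k = n + 1 on the right. *)

Section SummationByParts.
Variable R : comNzRingType.
Variables c c' w : nat -> R.
Hypothesis c'0 : c' 0 = c 0.
Hypothesis c'1 : c' 1 = c 1 + 2 * c 0.
Hypothesis c'SS : forall i, c' i.+2 = c i.+2 + 2 * c i.+1 + c i.

Lemma prefix_sum_smoothed j :
  \sum_(i < j.+2) c' i = 4 * \sum_(i < j.+2) c i - 3 * c j.+1 - c j.
Proof.
elim: j => [|j IH]; first by rewrite !big_ord_recr !big_ord0 /= c'0 c'1; ring.
by rewrite big_ord_recr /= IH c'SS [in RHS]big_ord_recr /=; ring.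
Qed.

Lemma sum_prefix_sums_smoothed n :
  \sum_(j < n.+2) (\sum_(i < j.+1) c' i) * w j =
  \sum_(j < n.+1) (\sum_(i < j.+1) c i) * (w j + 2 * w j.+1 + w j.+2)
  + c n.+1 * w n.+1 + (w n.+1 - w n.+2) * \sum_(i < n.+1) c i.
Proof.
elim: n => [|n IH].
  by rewrite !big_ord_recr !big_ord0 /= ?big_ord_recr ?big_ord0 /= c'0 c'1; ring.
rewrite big_ord_recr /= IH prefix_sum_smoothed [in RHS]big_ord_recr /=.
rewrite !big_ord_recr /=; ring.
Qed.

End SummationByParts.

Section GeneralizedBinomial.
Variable C : numFieldType.
Implicit Types x y : C.

Lemma binomC0 x : binomC x 0 = 1.
Proof. by rewrite /binomC big_ord0 fact0 divr1. Qed.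

Lemma binomCSr x i : binomC x i.+1 = binomC x i * (x - i%:R) / (i.+1)%:R.
Proof.
rewrite /binomC big_ord_recr /= factS natrM.
have fact_neq0 : (i`!)%:R != 0 :> C by rewrite pnatr_eq0 -lt0n fact_gt0.
by field; rewrite fact_neq0 andbT nat1r pnatr_eq0.
Qed.

Lemma mul_binomCSr x i : binomC x i.+1 * (i.+1)%:R = binomC x i * (x - i%:R).
Proof. by rewrite binomCSr divfK // pnatr_eq0. Qed.

Lemma binomCS x i : binomC (x + 1) i.+1 = binomC x i.+1 + binomC x i.
Proof.
elim: i => [|i IH]; first by rewrite !binomCSr !binomC0; field.
apply: (mulIf (x := (i.+2)%:R)); first by rewrite pnatr_eq0.
rewrite mul_binomCSr IH (_ : x + 1 - i.+1%:R = x - i%:R); last by rewrite -natr1; ring.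
rewrite mulrDl -mul_binomCSr [RHS]mulrDl [in RHS]mul_binomCSr -!natr1; ring.
Qed.

Lemma binomC_addr2 x i :
  binomC (x + 2) i.+2 = binomC x i.+2 + 2 * binomC x i.+1 + binomC x i.
Proof. by rewrite (_ : x + 2 = x + 1 + 1) ?binomCS; ring. Qed.

Lemma binomC_addr2_1 x : binomC (x + 2) 1 = binomC x 1 + 2 * binomC x 0.
Proof. by rewrite !binomCSr !binomC0; field. Qed.

Lemma mul_binomC_addr1 x i :
  binomC (x + 1) i * (x + 1 - i%:R) = binomC x i * (x + 1).
Proof.
elim: i => [|i IH]; first by rewrite !binomC0; ring.
rewrite !binomCSr.
transitivity (binomC (x + 1) i * (x + 1 - i%:R) * (x - i%:R) / (i.+1)%:R).
  by rewrite -!natr1; ring.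
by rewrite IH -!natr1; ring.
Qed.

Lemma mul_binomC_diag x i : (i.+1)%:R * binomC (x + 1) i.+1 = binomC x i * (x + 1).
Proof. by rewrite mulrC mul_binomCSr mul_binomC_addr1. Qed.

Lemma binomC_neq0 x i : (forall t, (t < i)%N -> x - t%:R != 0) -> binomC x i != 0.
Proof.
move=> x_neq; rewrite /binomC mulf_neq0 ?invr_eq0 ?pnatr_eq0 -?lt0n ?fact_gt0 //.
by apply/prodf_neq0 => t _; apply: x_neq.
Qed.

Lemma inv_binomC_smoothed y j :
    binomC y j != 0 -> y - j%:R != 0 -> y - 1 - j%:R != 0 ->
    y != 0 -> y - 1 != 0 -> y + 1 != 0 ->
  (y + 1)^-1 * ((binomC y j)^-1 + 2 * (binomC y j.+1)^-1 + (binomC y j.+2)^-1)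
  = (y - 1)^-1 * (binomC (y - 2) j)^-1.
Proof.
move=> bin_neq0 yj_neq0 y1j_neq0 y_neq0 y1_neq0 y2_neq0.
have binomC_sub2 : binomC (y - 2) j =
    binomC y j * ((y - j%:R) * (y - 1 - j%:R)) / (y * (y - 1)).
  apply: (mulIf (x := y * (y - 1))); first by rewrite mulf_neq0.
  have := mul_binomC_addr1 (y - 1) j; rewrite subrK => e1.
  have := mul_binomC_addr1 (y - 2) j.
  rewrite (_ : y - 2 + 1 = y - 1) => [e2|]; last by ring.
  by rewrite divfK ?mulf_neq0 // [RHS]mulrA e1 [RHS]mulrAC e2; ring.
rewrite binomC_sub2 !binomCSr -!natr1; field.
by rewrite yj_neq0 y1j_neq0 bin_neq0 y_neq0 y1_neq0 y2_neq0 !natr1 !pnatr_eq0.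
Qed.

Lemma sum_ratio_binomC_addr2 x y n :
    (forall t, (t <= n.+2)%N -> y + 1 - t%:R != 0) ->
  (y + 1)^-1 * \sum_(j < n.+2) \sum_(i < j.+1) binomC (x + 2) i / binomC y j
  = (y - 1)^-1 * \sum_(j < n.+1) \sum_(i < j.+1) binomC x i / binomC (y - 2) j
    + ((n.+2)%:R * binomC (y + 1) n.+2)^-1 *
      (binomC x n.+1 + (y - 2 * (n.+1)%:R - 1) * (\sum_(i < n.+1) binomC x i)
                        / (y - (n.+1)%:R)).
Proof.
move=> y1sub_neq0.
have ysub_neq0 t : (t <= n.+1)%N -> y - t%:R != 0.
  move=> le_tn; rewrite (_ : y - t%:R = y + 1 - t.+1%:R); first exact: y1sub_neq0.
  by rewrite -natr1; ring.
have y1_neq0 : y + 1 != 0 by have := y1sub_neq0 0%N isT; rewrite subr0.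
have bin_neq0 j : (j <= n.+1)%N -> binomC y j != 0.
  by move=> le_jn; apply: binomC_neq0 => t lt_tj; apply: ysub_neq0; lia.
under eq_bigr do rewrite -mulr_suml.
under [in RHS]eq_bigr do rewrite -mulr_suml.
have binomC_addr2_0 : binomC (x + 2) 0 = binomC x 0 by rewrite !binomC0.
rewrite (sum_prefix_sums_smoothed (fun j => (binomC y j)^-1) binomC_addr2_0
          (binomC_addr2_1 x) (binomC_addr2 x)).
rewrite mulrDr mulrDr -addrA; congr (_ + _).
  rewrite mulr_sumr [RHS]mulr_sumr; apply: eq_bigr => -[j /= lt_jn] _.
  have ysub1j_neq0 : y - 1 - j%:R != 0.
    by rewrite (_ : y - 1 - j%:R = y - j.+1%:R) ?ysub_neq0 // -natr1; ring.
  rewrite mulrCA [RHS]mulrCA inv_binomC_smoothed //.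
  - exact: bin_neq0 _ (ltnW lt_jn).
  - exact: ysub_neq0 _ (ltnW lt_jn).
  - by have := ysub_neq0 0%N isT; rewrite subr0.
  - exact: ysub_neq0 1%N isT.
rewrite -mulrDr mul_binomC_diag (binomCSr y n.+1).
move: (ysub_neq0 _ (leqnn n.+1)) (bin_neq0 _ (leqnn n.+1)) y1_neq0.
(* Abstracting the binomials keeps [field] from unfolding them. *)
move: (binomC x n.+1) (binomC y n.+1) (\sum_(i < n.+1) binomC x i) => c B S.
move=> yn_neq0 B_neq0 {}y1_neq0; field.
by rewrite nat1r yn_neq0 y1_neq0 B_neq0 -natrD pnatr_eq0.
Qed.
End GeneralizedBinomial.

Theorem theorem1 (C : numClosedFieldType) (n : nat) (a b : C)
  (hb : forall m : nat, b <> - (m.+1)%:R) :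
  (2 * n%:R + b + 2)^-1 *
    (\sum_(j < n.+1) \sum_(i < j.+1)
        binomC (2 * n%:R + a + 2) i / binomC (2 * n%:R + b + 1) j)
  = \sum_(k < n.+1)
      ((k.+1)%:R * binomC (2 * k%:R + b + 2) k.+1)^-1 *
      (binomC (2 * k%:R + a) k
        + b * (\sum_(j < k) binomC (2 * k%:R + a) j) / (k%:R + b + 1)).
Proof.
elim: n => [|n IH].
  rewrite !big_ord1 /= big_ord0 !binomC0 binomCSr binomC0.
  by rewrite !mulr0 mul0r addr0 add0r subr0 !divr1 !mul1r mulr1.
rewrite [RHS]big_ord_recr /= -IH.
set y := 2 * (n.+1)%:R + b + 1.
rewrite (_ : 2 * (n.+1)%:R + b + 2 = y + 1) ?sum_ratio_binomC_addr2; last by rewrite /y; ring.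
  rewrite (_ : y - 1 = 2 * n%:R + b + 2); last by rewrite /y -natr1; ring.
  rewrite (_ : y - 2 = 2 * n%:R + b + 1); last by rewrite /y -natr1; ring.
  rewrite (_ : 2 * n%:R + a + 2 = 2 * (n.+1)%:R + a); last by rewrite -natr1; ring.
  by congr (_ + _ * (_ + _ * _ / _)); rewrite /y -!natr1; ring.
have b_neq0 m : b + m.+1%:R != 0 by rewrite addr_eq0; apply/eqP.
move=> t le_tn; rewrite (_ : y + 1 - t%:R = b + (n.*2.+3 - t).+1%:R) ?b_neq0 //.
rewrite -subSn; last by lia.
rewrite natrB; last by lia.
by rewrite /y -addnn -!natr1 natrD; ring.
Qed.
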